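(* Let $\Sigma\in\mathbb{R}^{n\times n}$ be a symmetric positive definite matrix with eigenvalues $\lambda_1,\ldots,\lambda_n$ and condition number $\kappa=\lambda_{\max}/\lambda_{\min}$, where $\lambda_{\max}=\max_i\lambda_i$, $\lambda_{\min}=\min_i\lambda_i$. For $0<D\le\mathrm{tr}(\Sigma)$ let $L>0$ satisfy $\sum_{i=1}^n\min\{L,\lambda_i\}=D$, $D_i=\min\{L,\lambda_i\}$, and $R(D)=\sum_{i=1}^n\frac12\log\frac{\lambda_i}{D_i}$. For $\alpha\in[0,1]$, $D>0$ let $R_\alpha(D)=\frac12\log\det\big(\alpha I+\frac{n}{D}\Sigma\big)$, and let $\alpha^*\in[0,1]$ be the unique value with $R_{\alpha^*}(\mathrm{tr}(\Sigma))=0$. Then for every $D\in(0,\mathrm{tr}(\Sigma)]$, $$\frac12\log\frac1\kappa\le\frac{R_{\alpha^*}(D)-R(D)}{n}\le\frac12\log\Big(2-\frac1\kappa\Big).$$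
   Context: $\log$ denotes the logarithm to a fixed base greater than $1$. $R(D)$ is the mean-square-distortion rate-distortion function of an $n$-dimensional Gaussian vector with covariance $\Sigma$ (reverse water-filling); $I$ is the $n\times n$ identity matrix. *)

From HB Require Import structures.
From mathcomp Require Import all_boot all_order all_algebra.
From mathcomp Require Import all_classical all_reals all_analysis.
Set Implicit Arguments. Unset Strict Implicit. Unset Printing Implicit Defensive.
Import Order.TTheory GRing.Theory Num.Theory.
Local Open Scope ring_scope.

Section Defs.
Variable R : realType.

Definition logb (b x : R) : R := ln x / ln b.

Definition symmetric_mx n (S : 'M[R]_n) : Prop := S^T = S.

Definition posdef_mx n (S : 'M[R]_n) : Prop :=
  forall x : 'rV[R]_n, x != 0 -> 0 < (x *m S *m x^T) 0 0.

(* lam lists the eigenvalues of S with multiplicity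
   (roots of the characteristic polynomial) *)
Definition eigenvalues_of n (S : 'M[R]_n) (lam : 'I_n -> R) : Prop :=
  char_poly S = \prod_(i < n) ('X - (lam i)%:P).

Definition lam_max n (lam : 'I_n -> R) : R := \big[Num.max/0]_(i < n) lam i.
Definition lam_min n (lam : 'I_n -> R) : R :=
  \big[Num.min/lam_max lam]_(i < n) lam i.
Definition cond_number n (lam : 'I_n -> R) : R := lam_max lam / lam_min lam.

(* reverse water-filling rate-distortion function, given the water level L *)
Definition RD_wf (b : R) n (lam : 'I_n -> R) (L : R) : R :=
  \sum_(i < n) (1/2) * logb b (lam i / Num.min L (lam i)).

Definition R_alpha (b : R) n (S : 'M[R]_n) (alpha D : R) : R :=
  (1/2) * logb b (\det (alpha%:M + (n%:R / D) *: S)).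

End Defs.

(* R_alpha(D) - R(D) = (1/2) log prod_i y_i with
     y_i = (alpha + (n/D) lambda_i) D_i / lambda_i = alpha D_i / lambda_i + (n/D) D_i.
   Since D = sum_j D_j and D_j / kappa <= D_i for all i, j, we get
   (n/D) D_i >= 1/kappa, so every y_i is at least 1/kappa.  Conversely the
   bounds y_i <= alpha + (n/D) D_i sum to n (alpha + 1), so by AM-GM the product
   is at most (alpha + 1)^n.  The same comparison applied to
   prod_i (alpha* + (n / tr Sigma) lambda_i) = 1, which is R_alpha*(tr Sigma) = 0,
   gives alpha* + 1/kappa <= 1, i.e. alpha* + 1 <= 2 - 1/kappa. *)

From HB Require Import structures.
From mathcomp Require Import all_boot all_order all_algebra.
From mathcomp Require Import all_classical all_reals all_analysis.
From mathcomp Require Import ring lra.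
Set Implicit Arguments. Unset Strict Implicit. Unset Printing Implicit Defensive.
Import Order.TTheory GRing.Theory Num.Theory.
Local Open Scope ring_scope.

Lemma horner_char_poly (R : comNzRingType) n (A : 'M[R]_n) x :
  (char_poly A).[x] = \det (x%:M - A).
Proof.
rewrite /char_poly -horner_evalE -det_map_mx; congr (\det _).
apply/matrixP => i j; rewrite !mxE /= horner_evalE.
by rewrite hornerD hornerN hornerMn hornerX hornerC.
Qed.

Section Spectrum.
Variables (R : realType) (n : nat) (S : 'M[R]_n) (lam : 'I_n -> R).
Hypothesis lamS : eigenvalues_of S lam.

Lemma eigenvalues_of_eigenvalue i : eigenvalue S (lam i).
Proof.
rewrite eigenvalue_root_char lamS; apply/rootP.
by rewrite horner_prod (bigD1 i) //= !hornerE subrr mul0r.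
Qed.

Lemma posdef_eigenvalues_gt0 : posdef_mx S -> forall i, 0 < lam i.
Proof.
move=> Spd i; have /eigenvalueP[v vS v0] := eigenvalues_of_eigenvalue i.
have := Spd v v0; rewrite vS -scalemxAl mxE.
have vv_ge0 : 0 <= (v *m v^T) 0 0.
  by rewrite mxE; apply: sumr_ge0 => k _; rewrite mxE; exact: sqr_ge0.
by case: (ltP 0 (lam i)) => // le0; rewrite ltNge mulr_le0_ge0.
Qed.

Lemma det_add_scalar_scale (a c : R) :
  \det (a%:M + c *: S) = \prod_(i < n) (a + c * lam i).
Proof.
have [->|c0] := eqVneq c 0.
  by rewrite scale0r addr0 det_scalar -[X in a ^+ X]card_ord -prodr_const;
    apply: eq_bigr => i _; rewrite mul0r addr0.
have -> : a%:M + c *: S = (- c) *: ((- a / c)%:M - S).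
  rewrite scalerBr !scaleNr opprK scale_scalar_mx; congr (_ + _).
  by rewrite -(raddfN (@scalar_mx R n)); congr (_%:M); field.
rewrite detZ -horner_char_poly lamS horner_prod.
rewrite -[X in (- c) ^+ X]card_ord -prodr_const -big_split /=.
by apply: eq_bigr => i _; rewrite !hornerE; field.
Qed.

Lemma R_alpha_eigenvalues b (a D : R) :
  R_alpha b S a D = 1/2 * logb b (\prod_(i < n) (a + n%:R / D * lam i)).
Proof. by rewrite /R_alpha det_add_scalar_scale. Qed.

Lemma trace_eigenvalues : \tr S = \sum_(i < n) lam i.
Proof.
case: n S lam lamS => [|m] A mu muA; first by rewrite /mxtrace !big_ord0.
have := char_poly_trace A (ltn0Sn m); rewrite muA.
rewrite -big_enum /= -(big_map mu xpredT (fun x => 'X - x%:P)).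
have sz : size (map mu (enum 'I_m.+1)) = m.+1 by rewrite size_map size_enum_ord.
rewrite -[X in _`_X]/(m.+1.-1) -[in X in _`_X.-1]sz coefPn_prod_XsubC ?sz //.
by move=> /oppr_inj <-; rewrite big_map big_enum.
Qed.

End Spectrum.

Lemma ln_prod (R : realType) (I : Type) (r : seq I) (P : pred I) (F : I -> R) :
  (forall i, P i -> 0 < F i) ->
  ln (\prod_(i <- r | P i) F i) = \sum_(i <- r | P i) ln (F i).
Proof.
move=> F0; elim: r => [|i r IH]; first by rewrite !big_nil ln1.
rewrite !big_cons; case: ifP => // Pi.
by rewrite lnM ?IH // posrE ?F0 //; apply: prodr_gt0.
Qed.

Section Logb.
Variables (R : realType) (b : R).
Hypothesis b_gt1 : 1 < b.

Let lnb_gt0 : 0 < ln b. Proof. exact: ln_gt0. Qed.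

Lemma logb_eq0 (x : R) : 0 < x -> (logb b x == 0) = (x == 1).
Proof. by move=> x0; rewrite /logb mulf_eq0 invr_eq0 (gt_eqF lnb_gt0) orbF ln_eq0. Qed.

Lemma logb_div (x y : R) : 0 < x -> 0 < y -> logb b (x / y) = logb b x - logb b y.
Proof. by move=> x0 y0; rewrite /logb ln_div ?posrE // mulrBl. Qed.

Lemma logb_prod n (F : 'I_n -> R) : (forall i, 0 < F i) ->
  logb b (\prod_(i < n) F i) = \sum_(i < n) logb b (F i).
Proof. by move=> F0; rewrite /logb ln_prod // mulr_suml. Qed.

Lemma logbXn n (x : R) : 0 < x -> logb b (x ^+ n) = n%:R * logb b x.
Proof. by move=> x0; rewrite /logb lnXn // mulrA mulr_natl. Qed.

Lemma ler_logb : {in Num.pos &, {mono logb b : x y / x <= y}}.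
Proof. by move=> x y x0 y0; rewrite /logb ler_pM2r ?invr_gt0 // ler_ln. Qed.

Lemma ler_logb_divn n (x y : R) : (0 < n)%N -> 0 < x -> 0 < y ->
  (logb b x <= logb b y / n%:R) = (x ^+ n <= y).
Proof.
move=> n0 x0 y0.
by rewrite ler_pdivlMr ?ltr0n // mulrC -logbXn // ler_logb // posrE exprn_gt0.
Qed.

Lemma ler_divn_logb n (x y : R) : (0 < n)%N -> 0 < x -> 0 < y ->
  (logb b y / n%:R <= logb b x) = (y <= x ^+ n).
Proof.
move=> n0 x0 y0.
by rewrite ler_pdivrMr ?ltr0n // mulrC -logbXn // ler_logb // posrE exprn_gt0.
Qed.

End Logb.

Section ConditionNumber.
Variables (R : realType) (n : nat) (lam : 'I_n -> R).
Hypotheses (n_gt0 : (0 < n)%N) (lam_gt0 : forall i, 0 < lam i).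

Lemma lam_max_ge i : lam i <= lam_max lam.
Proof. by rewrite /lam_max (bigD1 i) //= le_max lexx. Qed.

Lemma lam_min_le i : lam_min lam <= lam i.
Proof. by rewrite /lam_min (bigD1 i) //= ge_min lexx. Qed.

Lemma lam_min_gt0 : 0 < lam_min lam.
Proof.
apply: (big_ind (fun x => 0 < x)) => [|x y x0 y0|i _]; last exact: lam_gt0.
- exact: lt_le_trans (lam_gt0 (Ordinal n_gt0)) (lam_max_ge _).
- by rewrite lt_min x0 y0.
Qed.

Lemma lam_max_gt0 : 0 < lam_max lam.
Proof. exact: lt_le_trans (lam_gt0 (Ordinal n_gt0)) (lam_max_ge _). Qed.

Lemma inv_cond_numberE : 1 / cond_number lam = lam_min lam / lam_max lam.
Proof. by rewrite /cond_number div1r invf_div. Qed.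

Lemma inv_cond_number_gt0 : 0 < 1 / cond_number lam.
Proof. by rewrite inv_cond_numberE divr_gt0 ?lam_min_gt0 ?lam_max_gt0. Qed.

Lemma inv_cond_number_le1 : 1 / cond_number lam <= 1.
Proof.
rewrite inv_cond_numberE ler_pdivrMr ?lam_max_gt0 // mul1r.
exact: le_trans (lam_min_le (Ordinal n_gt0)) (lam_max_ge _).
Qed.

Lemma inv_cond_number_mul_le i j : 1 / cond_number lam * lam j <= lam i.
Proof.
rewrite inv_cond_numberE mulrAC ler_pdivrMr ?lam_max_gt0 //.
by apply: ler_pM; rewrite ?lam_min_le ?lam_max_ge ?ltW ?lam_min_gt0 ?lam_gt0.
Qed.

End ConditionNumber.

Section Comparisons.
Variable R : realType.

Lemma ler_scale_mean n (f : 'I_n -> R) (k : R) i :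
  (forall i j, k * f j <= f i) -> 0 < \sum_(j < n) f j ->
  k <= n%:R / (\sum_(j < n) f j) * f i.
Proof.
move=> kf f0; rewrite mulrAC ler_pdivlMr // mulr_sumr.
rewrite mulr_natl -[X in _ *+ X]card_ord -sumr_const.
by apply: ler_sum => j _; exact: kf.
Qed.

Lemma ler_scale_min (k L x y : R) : 0 <= k <= 1 -> 0 <= L -> k * x <= y ->
  k * Num.min L x <= Num.min L y.
Proof.
move=> /andP[k0 k1] L0 kxy; rewrite le_min; apply/andP; split.
- have mL : Num.min L x <= L by rewrite ge_min lexx.
  by rewrite (le_trans (ler_wpM2l k0 mL)) // ler_piMl.
- have mx : Num.min L x <= x by rewrite ge_min lexx orbT.
  exact: le_trans (ler_wpM2l k0 mx) kxy.
Qed.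

Lemma le1_of_prod_eq1 n (g : 'I_n -> R) (x : R) : (0 < n)%N ->
  (forall i, 0 <= x <= g i) -> \prod_(i < n) g i = 1 -> x <= 1.
Proof.
move=> n0 xg g1; have x0 : 0 <= x by case/andP: (xg (Ordinal n0)).
rewrite -(expr_le1 n0 x0) -g1 -[X in x ^+ X]card_ord -prodr_const.
exact: ler_prod.
Qed.

Lemma prod_le_mean_expn n (y : 'I_n -> R) : (forall i, 0 <= y i) ->
  \prod_(i < n) y i <= ((\sum_(i < n) y i) / n%:R) ^+ n.
Proof.
by move=> y0; have [] := leif_AGM (A := 'I_n) (fun i _ => y0 i); rewrite card_ord.
Qed.

End Comparisons.

Section Gap.
Variables (R : realType) (n : nat) (lam : 'I_n -> R) (a D L : R).
Hypotheses (n_gt0 : (0 < n)%N) (lam_gt0 : forall i, 0 < lam i) (a_ge0 : 0 <= a).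
Hypotheses (D_gt0 : 0 < D) (L_gt0 : 0 < L).

Local Notation c := (n%:R / D).
Local Notation m i := (Num.min L (lam i)).

Let m_gt0 i : 0 < m i. Proof. by rewrite lt_min L_gt0 lam_gt0. Qed.

Let gap_factorE i : (a + c * lam i) * (m i / lam i) = a * (m i / lam i) + c * m i.
Proof. by field; rewrite !gt_eqF ?lam_gt0. Qed.

Let c_gt0 : 0 < c. Proof. by rewrite divr_gt0 ?ltr0n. Qed.

Let gap_factor_gt0 i : 0 < (a + c * lam i) * (m i / lam i).
Proof. by rewrite mulr_gt0 ?divr_gt0 // ltr_wpDl // mulr_gt0. Qed.

Lemma R_alpha_sub_RD_wf b (S : 'M[R]_n) : eigenvalues_of S lam ->
  R_alpha b S a D - RD_wf b lam L
    = 1/2 * logb b (\prod_(i < n) ((a + c * lam i) * (m i / lam i))).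
Proof.
move=> lamS; rewrite (R_alpha_eigenvalues lamS) /RD_wf -mulr_sumr -mulrBr.
have num_gt0 i : 0 < a + c * lam i by rewrite ltr_wpDl // mulr_gt0.
rewrite logb_prod // (logb_prod _ gap_factor_gt0) -sumrB; congr (_ * _).
apply: eq_bigr => i _.
by rewrite -[m i / lam i]invf_div !logb_div ?divr_gt0.
Qed.

Lemma gap_prod_gt0 : 0 < \prod_(i < n) ((a + c * lam i) * (m i / lam i)).
Proof. by apply: prodr_gt0 => i _; exact: gap_factor_gt0. Qed.

Lemma gap_prod_ge (k : R) : 0 <= k -> (forall i, k <= c * m i) ->
  k ^+ n <= \prod_(i < n) ((a + c * lam i) * (m i / lam i)).
Proof.
move=> k0 kcm; rewrite -[X in k ^+ X]card_ord -prodr_const; apply: ler_prod => i _.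
by rewrite k0 gap_factorE ler_wpDl ?(le_trans _ (kcm i)) // mulr_ge0 ?divr_ge0 // ltW.
Qed.

Lemma gap_prod_le : \sum_(i < n) m i = D ->
  \prod_(i < n) ((a + c * lam i) * (m i / lam i)) <= (a + 1) ^+ n.
Proof.
move=> mD; apply: (le_trans (prod_le_mean_expn (fun i => ltW (gap_factor_gt0 i)))).
rewrite ler_pXn2r // ?nnegrE ?addr_ge0 //; last first.
  by rewrite divr_ge0 ?sumr_ge0 // => i _; exact: ltW (gap_factor_gt0 i).
rewrite ler_pdivrMr ?ltr0n //.
have -> : (a + 1) * n%:R = \sum_(i < n) (a + c * m i).
  by rewrite big_split /= -mulr_sumr mD sumr_const card_ord; field; rewrite gt_eqF.
apply: ler_sum => i _; rewrite gap_factorE lerD2r ler_piMr //.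
by rewrite ler_pdivrMr // mul1r ge_min lexx orbT.
Qed.

End Gap.

Lemma R_alpha_trace_eq0_le1 (R : realType) b n (S : 'M[R]_n) lam (a : R) :
  1 < b -> (0 < n)%N -> posdef_mx S -> eigenvalues_of S lam -> 0 <= a ->
  R_alpha b S a (\tr S) = 0 -> a + 1 / cond_number lam <= 1.
Proof.
move=> b1 n0 Spd lamS a0; have lam0 := posdef_eigenvalues_gt0 lamS Spd.
have T0 : 0 < \sum_(i < n) lam i.
  by rewrite (bigD1 (Ordinal n0)) //= ltr_wpDr ?lam0 // sumr_ge0 // => i _; exact: ltW.
have factor_ge i : 1 / cond_number lam <= n%:R / \tr S * lam i.
  rewrite (trace_eigenvalues lamS); apply: ler_scale_mean => //.
  exact: inv_cond_number_mul_le.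
have factor_gt0 i : 0 < a + n%:R / \tr S * lam i.
  by rewrite ltr_wpDl // (lt_le_trans (inv_cond_number_gt0 n0 lam0)).
rewrite (R_alpha_eigenvalues lamS) => /eqP.
rewrite mulf_eq0 (logb_eq0 b1) ?prodr_gt0 // mul1r invr_eq0 pnatr_eq0 /= => /eqP prod1.
apply: (le1_of_prod_eq1 n0 _ prod1) => i.
by rewrite lerD2l factor_ge addr_ge0 // ltW // inv_cond_number_gt0.
Qed.

Theorem corollary1 (R : realType) (b : R) (n : nat) (S : 'M[R]_n)
    (lam : 'I_n -> R) (alpha_star D L : R) :
  1 < b -> (0 < n)%N ->
  symmetric_mx S -> posdef_mx S -> eigenvalues_of S lam ->
  0 <= alpha_star <= 1 -> R_alpha b S alpha_star (\tr S) = 0 ->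
  0 < D -> D <= \tr S ->
  0 < L -> \sum_(i < n) Num.min L (lam i) = D ->
  (1/2) * logb b (1 / cond_number lam)
    <= (R_alpha b S alpha_star D - RD_wf b lam L) / n%:R
  /\ (R_alpha b S alpha_star D - RD_wf b lam L) / n%:R
    <= (1/2) * logb b (2 - 1 / cond_number lam).
Proof.
move=> b1 n0 _ Spd lamS /andP[a0 _] Ra D0 _ L0 mD.
have lam0 := posdef_eigenvalues_gt0 lamS Spd.
have ak := R_alpha_trace_eq0_le1 b1 n0 Spd lamS a0 Ra.
set k := 1 / cond_number lam in ak *.
have k0 : 0 < k := inv_cond_number_gt0 n0 lam0.
have k1 : k <= 1 := inv_cond_number_le1 n0 lam0.
have km i : k <= n%:R / D * Num.min L (lam i).
  rewrite -mD; apply: ler_scale_mean => [i' j|]; last by rewrite mD.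
  by apply: ler_scale_min; rewrite ?k1 ?(ltW k0) ?(ltW L0) ?inv_cond_number_mul_le.
rewrite (R_alpha_sub_RD_wf n0 lam0 a0 D0 L0 b lamS) -(mulrA (1/2)).
have gap0 := gap_prod_gt0 n0 lam0 a0 D0 L0.
split; rewrite ler_pM2l //.
  by rewrite ler_logb_divn // gap_prod_ge // ltW.
rewrite ler_divn_logb // ?subr_gt0 ?(le_lt_trans k1) ?ltr1n //.
apply: le_trans (gap_prod_le n0 lam0 a0 D0 L0 mD) _.
by rewrite ler_pXn2r ?nnegrE //; lra.
Qed.
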